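(* Let $G$ be a virtually polycyclic group and let $M$ be a finitely generated module over the integral group ring $\mathbb{Z}G$. Then the depth $D(M)$ of $M$ in the category of $\mathbb{Z}G$-modules is finite.
   Context: In the category of $\mathbb{Z}G$-modules, $N\leqslant^d M$ means there exist module homomorphisms $f:N\to M$, $g:M\to N$ with $g\circ f=\mathrm{id}_N$; $N<^p M$ means $N\leqslant^d M$ and $N\not\cong M$. A chain of length $k$ for $M$ is $N_k<^p\cdots<^p N_1\leqslant^d M$; $D(M)$ is the supremum of the lengths of all chains for $M$. A group is virtually polycyclic if it has a polycyclic subgroup of finite index. *)

(* Infinite groups are modelled by MathComp's (not
   necessarily finite) [groupType] from boot/monoid.v; ZG-modules are
   abelian groups ([zmodType]) with a Z-linear action of G. *)
From HB Require Import structures.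
From mathcomp Require Import all_boot all_order all_algebra.

Set Implicit Arguments.
Unset Strict Implicit.
Unset Printing Implicit Defensive.

Import GRing.Theory.

Section GroupDefs.
Variable G : groupType.
Local Open Scope group_scope.

Definition is_subgroup (H : G -> Prop) : Prop :=
  H 1 /\ (forall x y, H x -> H y -> H (x * y^-1)).

Definition zpowg (x : G) (k : int) : G :=
  match k with Posz n => x ^+ n | Negz n => x ^- n.+1 end.

Definition cyclic_normal_step (H K : G -> Prop) : Prop :=
  [/\ is_subgroup H, is_subgroup K, (forall x, K x -> H x),
      (forall h k, H h -> K k -> K (k ^ h)) &
      exists2 x, H x & forall y, H y -> exists k : int, K ((zpowg x k)^-1 * y)].

Definition polycyclic_subgroup (H : G -> Prop) : Prop :=
  exists (n : nat) (S : nat -> G -> Prop),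
    [/\ (forall x, S 0%N x <-> H x), (forall x, S n x <-> x = 1) &
        forall i, (i < n)%N -> cyclic_normal_step (S i) (S i.+1)].

Definition finite_index (H : G -> Prop) : Prop :=
  exists s : seq G, forall g : G, exists2 t, t \in s & H (t^-1 * g).

Definition virtually_polycyclic : Prop :=
  exists H : G -> Prop,
    [/\ is_subgroup H, finite_index H & polycyclic_subgroup H].

End GroupDefs.

Local Open Scope ring_scope.

Record gmodule (G : groupType) := GModule {
  gcarrier :> zmodType;
  gact : G -> gcarrier -> gcarrier;
  gact_add : forall g (u v : gcarrier), gact g (u + v) = gact g u + gact g v;
  gact_one : forall v, gact 1%g v = v;
  gact_mul : forall g h v, gact (g * h)%g v = gact g (gact h v)
}.

Section ModuleDefs.
Variable G : groupType.

Definition gmod_hom (M N : gmodule G) (f : M -> N) : Prop :=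
  (forall u v, f (u + v) = f u + f v) /\
  (forall g m, f (gact g m) = gact g (f m)).

Definition gmod_iso (M N : gmodule G) : Prop :=
  exists f : M -> N, gmod_hom f /\ bijective f.

(* N <=^d M : N is a direct summand (retract) of M. *)
Definition dsub (N M : gmodule G) : Prop :=
  exists (f : N -> M) (g : M -> N), [/\ gmod_hom f, gmod_hom g & cancel f g].

Definition psub (N M : gmodule G) : Prop := dsub N M /\ ~ gmod_iso N M.

Definition gmod_fin_gen (M : gmodule G) : Prop :=
  exists s : seq M, forall m : M, exists t : seq (int * G * nat),
    m = \sum_(p <- t) (gact p.1.2 (nth 0 s p.2)) *~ p.1.1.

Definition gmod_chain (M : gmodule G) (k : nat) (N : nat -> gmodule G) : Prop :=
  ((0 < k)%N -> dsub (N 1%N) M) /\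
  (forall i, (1 <= i)%N -> (i < k)%N -> psub (N i.+1) (N i)).

Definition depth_finite (M : gmodule G) : Prop :=
  exists B : nat, forall (k : nat) (N : nat -> gmodule G),
    gmod_chain M k N -> (k <= B)%N.

End ModuleDefs.

(* M is Noetherian by Hall's theorem. For a cyclic extension H of K, with H/K
   generated by x, the K-span of x^0 s, ..., x^(d-1) s plays the role of the
   polynomials of degree < d in x, and the proof of the Hilbert basis theorem
   goes through: the leading coefficients of the elements of degree d of an
   H-submodule form an ascending, hence stationary, chain of K-submodules.
   Induction along the polycyclic series, starting from finitely generated
   abelian groups, and restriction to a subgroup of finite index show that
   finitely generated ZG-modules are Noetherian.

   A Noetherian module has finite uniform dimension: independent families of
   nonzero submodules have bounded length. If not, pick X maximal among the
   submodules over which independent families are unbounded; a member of such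
   a family contains a uniform submodule U with X /\ U = 0, families over
   X + U are bounded by maximality, and an exchange argument shows that
   families over X are at most one longer.

   Finally, a chain N_k <p ... <p N_1 <=d M yields idempotent endomorphisms
   e_1, ..., e_k of M with images isomorphic to the N_i and e_i e_j = e_j e_i
   = e_j for i <= j; the images of the e_i - e_(i+1) are k - 1 independent
   nonzero submodules, so k is bounded. *)

From HB Require Import structures.
From mathcomp Require Import all_boot all_order all_algebra.
From mathcomp Require Import boolp.

Set Implicit Arguments.
Unset Strict Implicit.
Unset Printing Implicit Defensive.
Import GRing.Theory.
Local Open Scope ring_scope.

Lemma sum_ord_delta (V : nmodType) n j (z : V) :
  (j < n)%N -> \sum_(i < n) (if (i : nat) == j then z else 0) = z.
Proof. by move=> jn; rewrite -big_mkcond (big_pred1 (Ordinal jn)). Qed.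

Section Subgroups.
Variable G : groupType.
Implicit Types (S : G -> Prop) (a b : G).

Lemma subgroup1 S : is_subgroup S -> S 1%g.
Proof. by case. Qed.

Lemma subgroupV S a : is_subgroup S -> S a -> S a^-1%g.
Proof. by move=> [S1 SM] Sa; have := SM _ _ S1 Sa; rewrite mul1g. Qed.

Lemma subgroupM S a b : is_subgroup S -> S a -> S b -> S (a * b)%g.
Proof. by move=> sgS Sa /(subgroupV sgS) Sb; have := sgS.2 _ _ Sa Sb; rewrite invgK. Qed.

Lemma subgroupX S a n : is_subgroup S -> S a -> S (a ^+ n)%g.
Proof.
move=> sgS Sa; elim: n => [|n IHn]; first by rewrite expg0; apply: subgroup1.
by rewrite expgS; apply: subgroupM.
Qed.

End Subgroups.

Section GModules.
Variable G : groupType.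
Implicit Types (M N P : gmodule G) (g h : G).

Lemma gact0 M g : gact g (0 : M) = 0.
Proof. by apply: (addrI (gact g 0)); rewrite -gact_add !addr0. Qed.

Lemma gactN M g (u : M) : gact g (- u) = - gact g u.
Proof. by apply: (addrI (gact g u)); rewrite -gact_add !subrr gact0. Qed.

Lemma gactB M g (u v : M) : gact g (u - v) = gact g u - gact g v.
Proof. by rewrite gact_add gactN. Qed.

Lemma gact_sum M (I : Type) (r : seq I) (F : I -> M) g :
  gact g (\sum_(i <- r) F i) = \sum_(i <- r) gact g (F i).
Proof. by rewrite (big_morph _ (gact_add g) (gact0 M g)). Qed.

Lemma gactK M g : cancel (@gact G M g) (gact g^-1%g).
Proof. by move=> u; rewrite -gact_mul mulVg gact_one. Qed.

Lemma gactVK M g : cancel (@gact G M g^-1%g) (gact g).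
Proof. by move=> u; rewrite -gact_mul mulgV gact_one. Qed.

Lemma gact_conjC M k g (u : M) : gact k (gact g u) = gact g (gact (k ^ g)%g u).
Proof. by rewrite -!gact_mul conjgC. Qed.

Lemma gmod_hom0 M N (f : M -> N) : gmod_hom f -> f 0 = 0.
Proof. by case=> fD _; apply: (addrI (f 0)); rewrite -fD !addr0. Qed.

Lemma gmod_homB M N (f : M -> N) u v : gmod_hom f -> f (u - v) = f u - f v.
Proof.
move=> homf; rewrite homf.1; congr (_ + _); apply: (addrI (f v)).
by rewrite -homf.1 !subrr gmod_hom0.
Qed.

Lemma gmod_hom_sum M N (f : M -> N) n (F : nat -> M) : gmod_hom f ->
  f (\sum_(i < n) F i) = \sum_(i < n) f (F i).
Proof. by move=> homf; rewrite (big_morph _ homf.1 (gmod_hom0 homf)). Qed.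

Lemma gmod_hom_comp M N P (f : M -> N) (g : N -> P) :
  gmod_hom f -> gmod_hom g -> gmod_hom (g \o f).
Proof. by move=> [fD fA] [gD gA]; split=> [u v|h m] /=; rewrite ?fD ?gD ?fA ?gA. Qed.

End GModules.

(** * Submodules and Noetherian modules *)

Section Submodules.
Variables (G : groupType) (M : gmodule G).
Implicit Types (H K : G -> Prop) (P Q X : M -> Prop) (s t : seq M).

Definition is_submod H P :=
  [/\ P 0, forall u v, P u -> P v -> P (u - v)
         & forall h u, H h -> P u -> P (gact h u)].

Definition span H s (m : M) := forall P, is_submod H P -> {in s, forall y, P y} -> P m.

Definition fg_submod H P :=
  exists2 t, {in t, forall y, P y} & forall z, P z -> span H t z.

Definition noetherian H X :=
  forall P, is_submod H P -> (forall z, P z -> X z) -> fg_submod H P.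

Section SubmodClosure.
Variables (H : G -> Prop) (P : M -> Prop).
Hypothesis subP : is_submod H P.

Lemma submod0 : P 0. Proof. by case: subP. Qed.

Lemma submodB u v : P u -> P v -> P (u - v). Proof. by case: subP => _ + _; apply. Qed.

Lemma submod_act h u : H h -> P u -> P (gact h u). Proof. by case: subP => _ _; apply. Qed.

Lemma submodN u : P u -> P (- u).
Proof. by move=> Pu; rewrite -sub0r; apply: submodB => //; apply: submod0. Qed.

Lemma submodD u v : P u -> P v -> P (u + v).
Proof. by move=> Pu Pv; rewrite -[v]opprK; apply/submodB/submodN. Qed.

Lemma submodMz u (n : int) : P u -> P (u *~ n).
Proof.
have PMn k : P u -> P (u *+ k).
  move=> Pu; elim: k => [|k IHk]; first by rewrite mulr0n; apply: submod0.
  by rewrite mulrS; apply: submodD.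
by case: n => k Pu; rewrite ?NegzE ?mulrNz; [apply: PMn | apply/submodN/PMn].
Qed.

Lemma submod_sum (I : Type) (r : seq I) (F : I -> M) :
  (forall i, P (F i)) -> P (\sum_(i <- r) F i).
Proof.
move=> PF; elim: r => [|i r IHr]; first by rewrite big_nil; apply: submod0.
by rewrite big_cons; apply: submodD.
Qed.

End SubmodClosure.

Lemma submodI H P Q : is_submod H P -> is_submod H Q -> is_submod H (fun z => P z /\ Q z).
Proof.
move=> subP subQ; split; first by split; [apply: submod0 subP | apply: submod0 subQ].
- by move=> u v [Pu Qu] [Pv Qv]; split; [apply: (submodB subP) | apply: (submodB subQ)].
- move=> h u Hh [Pu Qu].
  by split; [apply: (submod_act subP Hh) | apply: (submod_act subQ Hh)].
Qed.

Lemma submod_zero H : is_submod H (fun z : M => z = 0).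
Proof. by split=> [|u v -> ->|h u _ ->]; rewrite ?subr0 ?gact0. Qed.

Definition sum_submod P Q z := exists u v, [/\ P u, Q v & z = u + v].

Lemma submod_sum_submod H P Q :
  is_submod H P -> is_submod H Q -> is_submod H (sum_submod P Q).
Proof.
move=> subP subQ; split.
- by exists 0, 0; rewrite addr0; split; [apply: (submod0 subP) | apply: (submod0 subQ)|].
- move=> _ _ [u [v [Pu Qv ->]]] [u' [v' [Pu' Qv' ->]]]; exists (u - u'), (v - v').
  by rewrite opprD addrACA; split; [apply: (submodB subP) | apply: (submodB subQ)|].
- move=> h _ Hh [u [v [Pu Qv ->]]]; exists (gact h u), (gact h v).
  by rewrite gact_add; split; [apply: (submod_act subP) | apply: (submod_act subQ)|].
Qed.

Lemma sum_submodl H P Q z : is_submod H Q -> P z -> sum_submod P Q z.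
Proof. by move=> subQ Pz; exists z, 0; rewrite addr0; split=> //; apply: (submod0 subQ). Qed.

Lemma sum_submodr H P Q z : is_submod H P -> Q z -> sum_submod P Q z.
Proof. by move=> subP Qz; exists 0, z; rewrite add0r; split=> //; apply: (submod0 subP). Qed.

Lemma submod_bigI H m (B : nat -> M -> Prop) : (forall j, (j < m)%N -> is_submod H (B j)) ->
  is_submod H (fun z => forall j, (j < m)%N -> B j z).
Proof.
move=> subB; split=> [j jm|u v Bu Bv j jm|h u Hh Bu j jm].
- exact: (submod0 (subB j jm)).
- by apply: (submodB (subB j jm)); [apply: Bu | apply: Bv].
- by apply: (submod_act (subB j jm)) => //; apply: Bu.
Qed.

Definition hom_image (N : gmodule G) (f : N -> M) z := exists m, z = f m.

Lemma submod_hom_image H (N : gmodule G) (f : N -> M) :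
  gmod_hom f -> is_submod H (hom_image f).
Proof.
move=> homf; split=> [|_ _ [u ->] [v ->]|h _ _ [u ->]].
- by exists 0; rewrite gmod_hom0.
- by exists (u - v); rewrite gmod_homB.
- by exists (gact h u); rewrite homf.2.
Qed.

Lemma submod_sub H K P : (forall g, K g -> H g) -> is_submod H P -> is_submod K P.
Proof. by move=> KH [P0 PB PA]; split=> // h u /KH; apply: PA. Qed.

Lemma span_submod H s : is_submod H (span H s).
Proof.
split=> [P subP _|u v su sv P subP sP|h u Hh su P subP sP].
- exact: (submod0 subP).
- by apply: (submodB subP); [apply: su | apply: sv].
- by apply: (submod_act subP Hh); apply: su.
Qed.

Section SpanClosure.
Variables (H : G -> Prop) (s : seq M).

Let subS := span_submod H s.

Lemma span0 : span H s 0. Proof. exact: (submod0 subS). Qed.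

Lemma spanB u v : span H s u -> span H s v -> span H s (u - v).
Proof. exact: (submodB subS). Qed.

Lemma spanD u v : span H s u -> span H s v -> span H s (u + v).
Proof. exact: (submodD subS). Qed.

Lemma spanMz u n : span H s u -> span H s (u *~ n).
Proof. exact: (submodMz subS). Qed.

Lemma span_gact h u : H h -> span H s u -> span H s (gact h u).
Proof. exact: (submod_act subS). Qed.

End SpanClosure.

Lemma span_mem H s y : y \in s -> span H s y.
Proof. by move=> ys P _; apply. Qed.

Lemma span_trans H s t m : {in s, forall y, span H t y} -> span H s m -> span H t m.
Proof. by move=> st; apply; [apply: span_submod | apply: st]. Qed.

Lemma span_sub H K s m : (forall g, H g -> K g) -> span H s m -> span K s m.
Proof. by move=> HK sm P subP; apply: sm; apply: submod_sub subP. Qed.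

Lemma span_map_gact H g s m : (forall k, H k -> H (k ^ g^-1)%g) ->
  span H s m -> span H (map (gact g) s) (gact g m).
Proof.
move=> Hg sm; apply: (sm (fun m => span H (map (gact g) s) (gact g m))) => [|y ys]; last first.
  by apply: span_mem; apply: map_f.
split=> [|u v su sv|k u Hk su].
- by rewrite gact0; apply: span0.
- by rewrite gactB; apply: spanB.
- rewrite -[k](conjgKV g) -gact_conjC.
  by apply: span_gact => //; apply: Hg.
Qed.

End Submodules.

Section NoetherianModules.
Variables (G : groupType) (M : gmodule G).
Implicit Types (H : G -> Prop) (X : M -> Prop).

Lemma noetherian_ascending H X (L : nat -> M -> Prop) : noetherian H X ->
  (forall n, is_submod H (L n)) -> (forall n z, L n z -> L n.+1 z) ->
  (forall n z, L n z -> X z) -> exists N, forall n z, L n z -> L N z.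
Proof.
move=> noethX subL incL LX.
have monoL n n' z : (n <= n')%N -> L n z -> L n' z.
  by move/subnK <-; elim: (n' - n)%N => // k IHk /IHk; rewrite addSn; apply: incL.
pose U z := exists n, L n z.
have subU : is_submod H U.
  split; first by exists 0%N; apply: (submod0 (subL 0%N)).
  - move=> u v [n1 Lu] [n2 Lv]; exists (maxn n1 n2); apply: (submodB (subL _)).
    + by apply: monoL Lu; apply: leq_maxl.
    + by apply: monoL Lv; apply: leq_maxr.
  - by move=> h u Hh [n Lu]; exists n; apply: (submod_act (subL n)).
have [|t tU Ut] := noethX U subU; first by move=> z [n /LX].
have [N tN] : exists N, {in t, forall y, L N y}.
  elim: t tU {Ut} => [|y t IHt] tU; first by exists 0%N.
  have [n Ly] := tU y (mem_head _ _).
  have [N tN] := IHt (fun z zt => tU z (mem_behead (s := y :: t) zt)).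
  exists (maxn n N) => z; rewrite inE => /predU1P [-> | zt].
  - by apply: monoL Ly; apply: leq_maxl.
  - by apply: monoL (tN z zt); apply: leq_maxr.
by exists N => n z Lz; apply: (Ut z (ex_intro _ n Lz)).
Qed.

Lemma noetherian_max H X (F : (M -> Prop) -> Prop) : noetherian H X ->
  (forall Y, F Y -> is_submod H Y /\ forall z, Y z -> X z) -> (exists Y, F Y) ->
  exists2 Y, F Y & forall Z, F Z -> (forall z, Y z -> Z z) -> forall z, Z z -> Y z.
Proof.
move=> noethX FX [Y0 FY0]; apply: contrapT => nomax.
have grow Y : exists Z, F Y -> [/\ F Z, forall z, Y z -> Z z & exists2 z, Z z & ~ Y z].
  have [FY|nFY] := EM (F Y); last by exists Y.
  apply: contrapT => nZ; apply: nomax; exists Y => // Z FZ YZ z Zz.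
  by apply: contrapT => nYz; apply: nZ; exists Z => _; split=> //; exists z.
have [f fP] := choice grow.
pose L n := iter n f Y0.
have FL n : F (L n) by elim: n => //= n IHn; case: (fP _ IHn).
have [N LN] := noetherian_ascending noethX (fun n => (FX _ (FL n)).1)
  (fun n => let: And3 _ Lf _ := fP _ (FL n) in Lf) (fun n => (FX _ (FL n)).2).
by case: (fP _ (FL N)) => _ _ [z Lz]; apply; apply: (LN N.+1).
Qed.

Definition fg_noetherian H := forall s : seq M, noetherian H (span H s).

Lemma fg_noetherian_eq H H' : (forall g, H g <-> H' g) -> fg_noetherian H -> fg_noetherian H'.
Proof.
move=> HH' noethH s P subP Ps.
have [||t tP Pt] := noethH s P.
- by apply: submod_sub subP => g /HH'.
- by move=> z /Ps; apply: span_sub => g /HH'.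
by exists t => // z /Pt; apply: span_sub => g /HH'.
Qed.

End NoetherianModules.

(** * Hall's theorem *)

Lemma int_subgroup_dvd (I : int -> Prop) :
  I 0 -> (forall a b, I a -> I b -> I (a - b)) -> exists2 d, I d & forall n, I n -> (d %| n)%Z.
Proof.
move=> I0 IB; have IN a : I a -> I (- a) by rewrite -sub0r; apply: IB.
have IMz a (q : int) : I a -> I (a * q).
  have IMn (k : nat) : I a -> I (a * k%:Z).
    move=> Ia; elim: k => [|k IHk]; first by rewrite mulr0.
    by rewrite -addn1 PoszD mulrDr mulr1 -[a in _ + a]opprK; apply: IB => //; apply: IN.
  by case: q => k Ia; rewrite ?NegzE ?mulrN; [apply: IMn | apply/IN/IMn].
have [pos|nopos] := EM (exists k : nat, (0 < k)%N && `[< I k >]); last first.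
  exists 0 => // n; rewrite dvd0z; case: n => k Ik; apply: contrapT => /negP k0; apply: nopos.
    by exists k; rewrite lt0n -eqz_nat k0; apply/asboolP.
  by exists k.+1; apply/asboolP; rewrite -[Posz _]opprK -NegzE; apply: IN.
have [d /andP [d0 /asboolP Id] dmin] := find_ex_minn pos.
exists (Posz d) => // n In; apply/dvdz_mod0P.
have Ir : I (n %% d)%Z.
  rewrite [X in I X](_ : _ = n - (n %/ d)%Z * d).
    by apply: IB => //; rewrite mulrC; apply: IMz.
  by rewrite {2}(divz_eq n d) addrAC subrr add0r.
have d0' : (Posz d != 0) by rewrite eqz_nat -lt0n.
move: (modz_ge0 n d0') (ltz_pmod n (d0 : 0 < Posz d)) Ir.
case: (n %% d)%Z => // r _; rewrite ltz_nat => rd Ir; apply/eqP; rewrite eqz_nat.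
by apply: contraTT rd => r0; rewrite -leqNgt; apply: dmin; rewrite lt0n r0; apply/asboolP.
Qed.

Section TrivialAction.
Variables (G : groupType) (M : gmodule G) (H : G -> Prop).
Hypothesis H1 : forall h, H h -> h = 1%g.

Lemma span_cons_trivial (y : M) s m :
  span H (y :: s) m -> exists n : int, exists2 w, span H s w & m = y *~ n + w.
Proof.
move=> sm; apply: (sm (fun m => exists n : int, exists2 w, span H s w & m = y *~ n + w)).
  split=> [|u v [n1 [w1 s1 ->]] [n2 [w2 s2 ->]]|h u /H1 -> [n [w sw ->]]].
  - by exists 0, 0; [apply: span0 | rewrite mulr0z addr0].
  - exists (n1 - n2), (w1 - w2); first exact: spanB.
    by rewrite mulrzBr opprD addrACA.
  - by exists n, w; rewrite ?gact_one.
move=> z; rewrite inE => /predU1P [-> | zs].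
- by exists 1, 0; [apply: span0 | rewrite addr0].
- by exists 0, z; [apply: span_mem | rewrite mulr0z add0r].
Qed.

Lemma noetherian_span_trivial (s : seq M) : noetherian H (span H s).
Proof.
elim: s => [|y s IHs] P subP Ps; first by exists [::] => // z /Ps.
pose I n := exists2 w, span H s w & P (y *~ n + w).
have [||d [w0 sw0 Pg] dvdI] := @int_subgroup_dvd I.
- exists 0; first exact: span0.
  by rewrite mulr0z addr0; apply: (submod0 subP).
- move=> a b [wa sa Pa] [wb sb Pb]; exists (wa - wb); first exact: spanB.
  by rewrite mulrzBr -addrACA -opprD; apply: (submodB subP).
set g := y *~ d + w0 in Pg.
have [t tP Pt] := IHs _ (submodI subP (span_submod H s)) (fun z => @proj2 _ _).
exists (g :: t) => [z|z Pz]; first by rewrite inE => /predU1P [-> | /tP []].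
have [n [w sw ez]] := span_cons_trivial (Ps z Pz).
have /dvdzP [q en] : (d %| n)%Z by apply: dvdI; exists w => //; rewrite -ez.
have ez' : z - g *~ q = w - w0 *~ q.
  by rewrite ez en mulrC mulrzA /g mulrzDl opprD addrACA subrr add0r.
rewrite -[z](subrK (g *~ q)); apply: spanD.
- apply: span_trans (Pt _ _) => [u ut|]; first by apply: span_mem; rewrite inE ut orbT.
  split; first by apply: (submodB subP) => //; apply: (submodMz subP).
  by rewrite ez'; apply: spanB => //; apply: spanMz.
- by apply: spanMz; apply: span_mem; rewrite mem_head.
Qed.

End TrivialAction.

Section CyclicExtension.
Variables (G : groupType) (M : gmodule G) (H K : G -> Prop) (x : G).
Hypotheses (subgroupH : is_subgroup H) (KH : forall k, K k -> H k).
Hypothesis normalK : forall h k, H h -> K k -> K (k ^ h)%g.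
Hypotheses (Hx : H x) (genH : forall h, H h -> exists n : int, K ((zpowg x n)^-1 * h)%g).
Hypothesis noethK : fg_noetherian M K.
Variable s : seq M.

Local Notation X n := (x ^+ n)%g.
Local Notation V := (span K s).

(* [W d] stands for the polynomials of degree < [d] in [x] with coefficients in [V]. *)
Definition xtranslates d := [seq gact (X n) y | n <- iota 0 d, y <- s].
Local Notation W d := (span K (xtranslates d)).

Let HX n : H (X n). Proof. exact: subgroupX. Qed.

Let K_conjX n k : K k -> K (k ^ X n)%g. Proof. exact: normalK. Qed.

Let K_conjXV n k : K k -> K (k ^ (X n)^-1)%g.
Proof. by apply: normalK; apply: subgroupV. Qed.

Lemma mem_xtranslates d n y : (n < d)%N -> y \in s -> gact (X n) y \in xtranslates d.
Proof. by move=> nd ys; apply/allpairsP; exists (n, y); rewrite mem_iota add0n. Qed.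

Lemma W_mono d d' m : (d <= d')%N -> W d m -> W d' m.
Proof.
move=> le_dd'; apply: span_trans => z /allpairsP [[n y] [/=]].
rewrite mem_iota add0n => /andP [_ nd] ys ->.
by apply: span_mem; apply: mem_xtranslates => //; apply: leq_trans nd le_dd'.
Qed.

Lemma W_act j d m : W d m -> W (j + d) (gact (X j) m).
Proof.
move=> /(span_map_gact (K_conjXV j)); apply: span_trans.
move=> z /mapP [z2 /allpairsP [[n y] [/=]]].
rewrite mem_iota add0n => /andP [_ nd] ys -> ->.
by rewrite -gact_mul -expgnDr; apply: span_mem; apply: mem_xtranslates; rewrite ?ltn_add2l.
Qed.

Lemma W_lead d v : V v -> W d.+1 (gact (X d) v).
Proof.
move=> Vv; rewrite -addn1; apply: W_act; apply: span_trans Vv => y ys.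
by rewrite -[y]gact_one -(expg0 x); apply: span_mem; apply: mem_xtranslates.
Qed.

Lemma W_split d m : W d.+1 m -> exists v w, [/\ V v, W d w & m = gact (X d) v + w].
Proof.
pose Q m := exists v w, [/\ V v, W d w & m = gact (X d) v + w].
move=> Wm; apply: (Wm Q); last first.
  move=> z /allpairsP [[n y] []]; rewrite mem_iota add0n ltnS /= leq_eqVlt.
  move=> /predU1P [-> | nd] ys ->.
  - by exists y, 0; split; [apply: span_mem | apply: span0 | rewrite addr0].
  - exists 0, (gact (X n) y); rewrite gact0 add0r; split=> //; first exact: span0.
    by apply: span_mem; apply: mem_xtranslates.
split=> [|u u' [v [w [Vv Ww ->]]] [v' [w' [Vv' Ww' ->]]]|k u Kk [v [w [Vv Ww ->]]]].
- by exists 0, 0; rewrite gact0 addr0; split=> //; apply: span0.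
- exists (v - v'), (w - w'); split; [exact: spanB | exact: spanB |].
  by rewrite gactB opprD addrACA.
- exists (gact (k ^ X d) v), (gact k w); rewrite gact_add gact_conjC; split=> //.
  + by apply: span_gact => //; apply: K_conjX.
  + exact: span_gact.
Qed.

Lemma W_of_span m : span H s m -> exists a d, W d (gact (X a) m).
Proof.
move=> sm; apply: (sm (fun m => exists a d, W d (gact (X a) m))); last first.
  by move=> y ys; exists 0%N, 1%N; apply: span_mem; apply: mem_xtranslates.
split=> [|u w [a1 [d1 W1]] [a2 [d2 W2]]|h u Hh [a [d Wu]]].
- by exists 0%N, 0%N; rewrite gact0; apply: span0.
- exists (a2 + a1)%N, (a2 + d1 + (a1 + d2))%N; rewrite gactB; apply: spanB.
  + by apply: W_mono (leq_addr _ _) _; rewrite expgnDr gact_mul; apply: W_act.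
  + apply: W_mono (leq_addl _ _) _.
    by rewrite [(a2 + a1)%N]addnC expgnDr gact_mul; apply: W_act.
- have [n Kk] := genH Hh.
  have -> : h = (zpowg x n * ((zpowg x n)^-1 * h))%g by rewrite mulVKg.
  move: ((zpowg x n)^-1 * h)%g Kk => k Kk; rewrite gact_mul.
  have Wk : W d (gact (X a) (gact k u)).
    rewrite -[k](conjgKV (X a)) -gact_conjC.
    by apply: span_gact => //; apply: K_conjXV.
  case: n => n /=.
  + exists a, (n + d)%N; rewrite -gact_mul -expgnDr [(a + n)%N]addnC expgnDr gact_mul.
    exact: W_act.
  + by exists (a + n.+1)%N, d; rewrite expgnDr !gact_mul gactVK.
Qed.

Section LeadingCoefficients.
Variable P : M -> Prop.
Hypothesis subP : is_submod H P.

Definition lead_coefs d v := V v /\ exists2 w, W d w & P (gact (X d) v + w).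

Lemma lead_coefs_submod d : is_submod K (lead_coefs d).
Proof.
split=> [|u u' [Vu [w Ww Pu]] [Vu' [w' Ww' Pu']]|k u Kk [Vu [w Ww Pu]]].
- split; first exact: span0.
  by exists 0; [exact: span0 | rewrite gact0 addr0; exact: (submod0 subP)].
- split; first exact: spanB.
  exists (w - w'); first exact: spanB.
  by rewrite gactB addrACA -opprD; apply: (submodB subP).
- have Kk' := K_conjXV d Kk; split; first exact: span_gact.
  exists (gact (k ^ (X d)^-1) w); first exact: span_gact.
  have := submod_act subP (KH Kk') Pu.
  by rewrite gact_add gact_conjC conjgKV.
Qed.

Lemma lead_coefs_succ d v : lead_coefs d v -> lead_coefs d.+1 v.
Proof.
move=> [Vv [w Ww Pv]]; split=> //; exists (gact x w).
  by have := @W_act 1%N _ _ Ww; rewrite expg1 add1n.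
by have := submod_act subP Hx Pv; rewrite gact_add -gact_mul -expgS.
Qed.

Lemma lead_coefs_stable : exists N, forall d v, lead_coefs d v -> lead_coefs N v.
Proof.
apply: noetherian_ascending (@noethK s) lead_coefs_submod lead_coefs_succ _.
by move=> d v [].
Qed.

Variables (N : nat) (t : seq M).
Hypothesis leadN : forall d v, lead_coefs d v -> lead_coefs N v.
Hypothesis genN : forall m, W N.+1 m -> P m -> span K t m.

Lemma span_low_degree d m : (d <= N.+1)%N -> W d m -> P m -> span H t m.
Proof. by move=> dN Wm Pm; apply: span_sub KH _; apply: genN => //; apply: W_mono dN Wm. Qed.

(* Above degree N, subtracting a translate of an element of degree N lowers the degree. *)
Lemma span_of_degree d m : W d m -> P m -> span H t m.
Proof.
elim: d m => [|d IHd] m; first exact: span_low_degree.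
have [dN | Nd] := leqP d N; first exact: span_low_degree.
move=> /W_split [v [w [Vv Ww ->]]] Pm.
have [_ [w' Ww' Pm']] : lead_coefs N v by apply: (@leadN d); split=> //; exists w.
set m' := gact (X N) v + w' in Pm'.
have sm' : span H t m'.
  apply: span_low_degree (leqnn _) _ Pm'; apply: spanD; first exact: W_lead.
  exact: W_mono (leqnSn N) Ww'.
set j := (d - N)%N.
have eX : gact (X j) m' = gact (X d) v + gact (X j) w'.
  by rewrite gact_add -gact_mul -expgnDr subnK // ltnW.
have Pm'' : P (gact (X j) m') := submod_act subP (HX j) Pm'.
rewrite -[_ + w](subrK (gact (X j) m')); apply: spanD; last exact: (span_gact (HX j)).
apply: IHd; last exact: (submodB subP).
rewrite eX [_ + w]addrC addrKA; apply: spanB => //.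
by have := @W_act j _ _ Ww'; rewrite subnK // ltnW.
Qed.

End LeadingCoefficients.

Lemma noetherian_cyclic_ext : noetherian H (span H s).
Proof.
move=> P subP Ps; have [N leadN] := lead_coefs_stable subP.
have subQ := submodI (submod_sub KH subP) (span_submod K (xtranslates N.+1)).
have [t tQ Qt] := @noethK (xtranslates N.+1) _ subQ (fun z => @proj2 _ _).
have genN m : W N.+1 m -> P m -> span K t m by move=> Wm Pm; apply: Qt.
exists t => [y /tQ [] // | z Pz]; have [a [d Wz]] := W_of_span (Ps z Pz).
rewrite -(gactK (X a) z); apply: span_gact; first exact: subgroupV.
by apply: (span_of_degree subP leadN genN Wz); apply: (submod_act subP).
Qed.

End CyclicExtension.

Definition setTg {G : groupType} : G -> Prop := fun _ => True.

Section VirtuallyPolycyclic.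
Variables (G : groupType) (M : gmodule G).

Lemma fg_noetherian_step H K :
  cyclic_normal_step H K -> fg_noetherian M K -> fg_noetherian M H.
Proof.
move=> [subH _ KH normK [x Hx genH]] noethK s.
exact: (noetherian_cyclic_ext subH KH normK Hx genH noethK).
Qed.

Lemma fg_noetherian_polycyclic H : polycyclic_subgroup H -> fg_noetherian M H.
Proof.
move=> [n [S [S0 Sn Sstep]]]; apply: fg_noetherian_eq S0 _.
suff noethS i : (i <= n)%N -> fg_noetherian M (S (n - i)%N).
  by rewrite -(subnn n); apply: noethS.
elim: i => [_ s|i IHi lt_in].
  by rewrite subn0; apply: noetherian_span_trivial => h /Sn.
rewrite -(subnSK lt_in) in IHi *; apply: fg_noetherian_step (IHi (ltnW lt_in)).
by apply: Sstep; rewrite subnSK // leq_subr.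
Qed.

Lemma span_finite_index H (s : seq M) : is_subgroup H -> finite_index H ->
  exists s', forall m, span setTg s m -> span H s' m.
Proof.
move=> subH [r cosets]; exists [seq gact t^-1%g y | t <- r, y <- s].
set s' := [seq _ | _ <- _, _ <- _].
have s'G g y : y \in s -> span H s' (gact g y).
  move=> ys; have [t tr Ht] := cosets g^-1%g.
  have -> : g = ((t^-1 * g^-1)^-1 * t^-1)%g by rewrite invgM !invgK mulgK.
  rewrite gact_mul; apply: span_gact; first exact: subgroupV.
  by apply: span_mem; apply/allpairsP; exists (t, y).
have span_s'G u : span H s' u -> forall g, span H s' (gact g u).
  move=> su; apply: (su (fun u => forall g, span H s' (gact g u))).
    split=> [g|u1 u2 s1 s2 g|h u1 _ s1 g]; rewrite ?gact0 ?gactB -?gact_mul.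
    - exact: span0.
    - exact: spanB.
    - exact: s1.
  by move=> _ /allpairsP [[t y] [_ ys ->]] g; rewrite -gact_mul; apply: s'G.
move=> m; apply=> [|y ys]; last by rewrite -[y]gact_one; apply: s'G.
split=> [|u v su sv|g u _ su]; [exact: span0 | exact: spanB | exact: span_s'G].
Qed.

Lemma fg_noetherian_finite_index H : is_subgroup H -> finite_index H ->
  fg_noetherian M H -> fg_noetherian M setTg.
Proof.
move=> subH fiH noethH s P subP Ps; have [s' ss'] := span_finite_index s subH fiH.
have [||t tP Pt] := noethH s' P; first exact: submod_sub subP.
  by move=> z /Ps /ss'.
by exists t => // z /Pt; apply: span_sub.
Qed.

Lemma noetherian_fin_gen : virtually_polycyclic G -> gmod_fin_gen M ->
  noetherian setTg (fun _ : M => True).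
Proof.
move=> [H [subH fiH pcH]] [s gen] P subP _.
have noethG := fg_noetherian_finite_index subH fiH (fg_noetherian_polycyclic pcH).
apply: (noethG s P subP) => m _; have [r ->] := gen m.
apply: (submod_sum (span_submod _ _)) => -[[n g] i] /=.
apply: spanMz; apply: span_gact => //.
have [lt_is | le_si] := ltnP i (size s); first by apply: span_mem; apply: mem_nth.
by rewrite nth_default //; apply: span0.
Qed.

End VirtuallyPolycyclic.

(** * Uniform dimension *)

Section UniformDimension.
Variables (G : groupType) (M : gmodule G).
Implicit Types (N U X Y : M -> Prop) (A : nat -> M -> Prop).
Local Notation submod := (is_submod setTg).

Definition nonzero (P : M -> Prop) := exists2 z, P z & z != 0.

Definition independent N (A : nat -> M -> Prop) m :=
  forall n (a : nat -> M), N n -> (forall i, (i < m)%N -> A i (a i)) ->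
    n + \sum_(i < m) a i = 0 -> n = 0 /\ forall i, (i < m)%N -> a i = 0.

Definition bounded_independent N := exists d : nat, forall m (A : nat -> M -> Prop),
  (forall i, (i < m)%N -> submod (A i) /\ nonzero (A i)) -> independent N A m -> (m <= d)%N.

Definition uniform U := [/\ submod U, nonzero U &
  forall P Q, submod P -> submod Q -> (forall z, P z -> U z) -> (forall z, Q z -> U z) ->
    nonzero P -> nonzero Q -> nonzero (fun z => P z /\ Q z)].

Lemma independent_disjoint X A m j : submod X -> independent X A m ->
  (forall i, (i < m)%N -> submod (A i)) -> (j < m)%N -> forall z, A j z -> X z -> z = 0.
Proof.
move=> subX indA subA jm z Az Xz.
have [|||_ /(_ j jm)] := indA (- z) (fun i => if i == j then z else 0).
- exact: (submodN subX).
- by move=> i im; case: eqP => [-> //|_]; apply: (submod0 (subA i im)).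
- by rewrite sum_ord_delta // addNr.
by rewrite eqxx.
Qed.

Hypothesis noethM : noetherian setTg (fun _ : M => True).

Lemma uniform_sub (A : M -> Prop) :
  submod A -> nonzero A -> exists2 U, uniform U & forall z, U z -> A z.
Proof.
move=> subA nzA.
pose F X := [/\ submod X, forall z, X z -> A z & exists Y, [/\ submod Y, forall z, Y z -> A z,
  nonzero Y & forall z, X z -> Y z -> z = 0]].
have [||X [subX XA [Y [subY YA nzY XY]]] Xmax] := noetherian_max noethM (F := F).
- by move=> X [subX _ _].
- exists (fun z => z = 0); split=> [||]; first exact: submod_zero.
    by move=> z ->; apply: (submod0 subA).
  by exists A; split=> // z _ ->.
exists Y => //; split=> // A1 B1 subA1 subB1 A1Y B1Y [a A1a a0] nzB1.
apply: contrapT => nzAB; apply/negP: a0; apply/negPn/eqP.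
have noAB z : A1 z -> B1 z -> z = 0.
  by move=> A1z B1z; apply: contrapT => /eqP z0; apply: nzAB; exists z.
have FX' : F (sum_submod X A1).
  split; first exact: submod_sum_submod.
    move=> _ [u [v [Xu A1v ->]]].
    by apply: (submodD subA); [apply: XA | apply/YA/A1Y].
  exists B1; split=> // [z /B1Y /YA //|_ [u [v [Xu A1v ->]]] B1uv].
  have u0 : u = 0.
    by apply: XY => //; rewrite -(addrK v u); apply: (submodB subY); [apply: B1Y | apply: A1Y].
  by move: B1uv; rewrite u0 add0r => /(noAB v A1v).
apply: XY (A1Y _ A1a); apply: (Xmax _ FX') (sum_submodr subX A1a).
by move=> z; apply: sum_submodl subA1.
Qed.

Lemma uniform_meet_nonzero U m (B : nat -> M -> Prop) : uniform U ->
  (forall j, (j < m)%N -> [/\ submod (B j), forall z, B j z -> U z & nonzero (B j)]) ->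
  nonzero (fun z => U z /\ forall j, (j < m)%N -> B j z).
Proof.
move=> [subU nzU meetU]; elim: m => [|m IHm] Bj.
  by case: nzU => z Uz z0; exists z.
have [subBm BmU nzBm] := Bj m (ltnSn m).
have subI : submod (fun z => U z /\ forall j, (j < m)%N -> B j z).
  by apply: submodI subU (submod_bigI _) => j jm; case: (Bj j (ltnW jm)).
have [|w [[Uw Bw] Bmw] w0] := meetU _ _ subI subBm (fun z => @proj1 _ _) BmU _ nzBm.
  by apply: IHm => j jm; apply: Bj; apply: ltnW.
exists w => //; split=> // j; rewrite ltnS leq_eqVlt => /predU1P [-> //|]; apply: Bw.
Qed.

Section Exchange.
Variables (N U : M -> Prop) (A : nat -> M -> Prop) (m : nat).
Hypotheses (subN : submod N) (subA : forall i, (i < m.+1)%N -> submod (A i)).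
Hypothesis indA : independent N A m.+1.

Definition sum_but j z := exists n (b : nat -> M),
  [/\ N n, forall i, (i < m.+1)%N -> A i (b i), b j = 0 & z = n + \sum_(i < m.+1) b i].

Lemma submod_sum_but j : submod (sum_but j).
Proof.
split=> [|_ _ [n [b [Nn Ab bj ->]]] [n' [b' [Nn' Ab' bj' ->]]]|h _ _ [n [b [Nn Ab bj ->]]]].
- exists 0, (fun _ => 0); rewrite big1 // addr0; split=> //; first exact: (submod0 subN).
  by move=> i im; apply: (submod0 (subA im)).
- exists (n - n'), (fun i => b i - b' i); split; first exact: (submodB subN).
  + by move=> i im; apply: (submodB (subA im)); [apply: Ab | apply: Ab'].
  + by rewrite bj bj' subr0.
  + by rewrite sumrB opprD addrACA.
- exists (gact h n), (fun i => gact h (b i)); split; first exact: (submod_act subN).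
  + by move=> i im; apply: (submod_act (subA im)) => //; apply: Ab.
  + by rewrite bj gact0.
  + by rewrite gact_add gact_sum.
Qed.

Lemma independent_drop j : (j < m.+1)%N -> (forall z, U z -> sum_but j z -> z = 0) ->
  independent (sum_submod N U) (fun i => A (bump j i)) m.
Proof.
move=> jm Uj _ a [n [u [Nn Uu ->]]] Aa sum0.
pose b i := if i == j then 0 else a (unbump j i).
have ba i : b (bump j i) = a i by rewrite /b eq_sym (negbTE (neq_bump j i)) bumpK.
have sumb : \sum_(i < m.+1) b i = \sum_(i < m) a i.
  rewrite (bigD1_ord (Ordinal jm)) //= {1}/b eqxx add0r.
  by apply: eq_bigr => i _; apply: ba.
have Ab i : (i < m.+1)%N -> A i (b i).
  move=> im; case: (unliftP (Ordinal jm) (Ordinal im)) => [k|] /(congr1 val) /= ->.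
  - by rewrite ba; apply: Aa.
  - by rewrite /b eqxx; apply: (submod0 (subA jm)).
have u0 : u = 0.
  apply: Uj => //; exists (- n), (fun i => - b i); split.
  - exact: (submodN subN).
  - by move=> i im; apply: (submodN (subA im)); apply: Ab.
  - by rewrite /b eqxx oppr0.
  - rewrite sumrN sumb -opprD; apply: (addIr (n + \sum_(i < m) a i)).
    by rewrite addNr addrA [u + n]addrC.
have [|n0 b0] := indA Nn Ab; first by rewrite sumb; move: sum0; rewrite u0 addr0.
split=> [|i im]; first by rewrite n0 u0 addr0.
by rewrite -ba; apply: b0; exact: (@lift_subproof m.+1 j (Ordinal im)).
Qed.

Hypotheses (uniU : uniform U) (UN : forall z, U z -> N z -> z = 0).

Lemma exchange :
  exists2 j, (j < m.+1)%N & independent (sum_submod N U) (fun i => A (bump j i)) m.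
Proof.
apply: contrapT => noj.
have nzUj j : (j < m.+1)%N -> nonzero (fun z => U z /\ sum_but j z).
  move=> jm; apply: contrapT => nz0; apply: noj; exists j => //.
  apply: independent_drop => // y Uy sy; apply: contrapT => /eqP y0; apply: nz0.
  by exists y; first split.
have [|z [Uz sz] /eqP[]] := @uniform_meet_nonzero U m.+1 (fun j y => U y /\ sum_but j y) uniU.
  move=> j jm; split; [|by move=> y [] | exact: nzUj].
  by case: uniU => subU _ _; apply: submodI subU (submod_sum_but j).
have [_ [n0 [b0 [Nn0 Ab0 _ ez]]]] := sz 0%N (ltn0Sn m).
have b00 i : (i < m.+1)%N -> b0 i = 0.
  move=> im; have [_ [n [b [Nn Ab bi ez']]]] := sz i im.
  have [|||_ /(_ i im)/eqP] := indA (n := n0 - n) (a := fun i => b0 i - b i).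
  - exact: (submodB subN).
  - by move=> k km; apply: (submodB (subA km)); [apply: Ab0 | apply: Ab].
  - by rewrite sumrB addrACA -opprD -ez -ez' subrr.
  by rewrite bi subr0 => /eqP.
apply: UN => //; rewrite ez big1 ?addr0 // => i _; exact: b00.
Qed.

End Exchange.

Lemma bounded_independent0 : bounded_independent (fun z => z = 0).
Proof.
apply: contrapT => unb0.
pose F X := submod X /\ ~ bounded_independent X.
have [||X [subX unbX] Xmax] := noetherian_max noethM (F := F).
- by move=> X [subX _].
- by exists (fun z => z = 0); split=> //; apply: submod_zero.
have [m [A [Anz indA]]] : exists m A,
    (forall i, (i < m.+1)%N -> submod (A i) /\ nonzero (A i)) /\ independent X A m.+1.
  apply: contrapT => nofam; apply: unbX; exists 0%N => -[//|m] A Anz indA.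
  by case: nofam; exists m, A.
have [U uniU UA] := uniform_sub (Anz 0%N isT).1 (Anz 0%N isT).2.
have [subU [u Uu u0] _] := uniU.
have subA i : (i < m.+1)%N -> submod (A i) by case/Anz.
have UX z : U z -> X z -> z = 0.
  by move=> /UA; apply: (independent_disjoint subX indA subA (ltn0Sn m)).
have [d bd] : bounded_independent (sum_submod X U).
  apply: contrapT => unbXU; move/eqP: u0; apply; apply: UX => //.
  apply: (Xmax _ (conj (submod_sum_submod subX subU) unbXU) _ _ (sum_submodr subX Uu)).
  by move=> z; apply: sum_submodl subU.
apply: unbX; exists d.+1 => -[//|m'] A' A'nz indA'.
have [j jm indj] := exchange subX (fun i im => (A'nz i im).1) indA' uniU UX.
rewrite ltnS; apply: bd indj => i im; apply: A'nz.
exact: (@lift_subproof m'.+1 j (Ordinal im)).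
Qed.

End UniformDimension.

(** * Chains of direct summands *)

Section ChainIdempotents.
Variables (G : groupType) (M : gmodule G).
Implicit Types (e : nat -> M -> M) (k : nat).

Definition idempotent_chain e k :=
  [/\ forall j, (j < k)%N -> gmod_hom (e j),
      forall j m, (j < k)%N -> e j (e j m) = e j m,
      forall j m, (j.+1 < k)%N -> e j.+1 (e j m) = e j.+1 m /\ e j (e j.+1 m) = e j.+1 m
    & forall j, (j.+1 < k)%N -> ~ e j =1 e j.+1].

(* [e j] is an idempotent of [M] with image isomorphic to [N j.+1]. *)
Lemma chain_idempotents k (N : nat -> gmodule G) : gmod_chain M k.+1 N ->
  exists e (f : N k.+1 -> M) (g : M -> N k.+1),
    [/\ idempotent_chain e k.+1, gmod_hom f, gmod_hom g, cancel f g & e k =1 f \o g].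
Proof.
elim: k => [|k IHk] [chain1 chainS].
  have [f [g [homf homg fK]]] := chain1 isT.
  exists (fun _ => f \o g), f, g; split=> //; split=> // j.
  - by move=> _; apply: gmod_hom_comp homg homf.
  - by move=> m _ /=; rewrite fK.
have [|e [f [g [[home idem adj dist] homf homg fK efg]]]] := IHk.
  by split=> [_|i i1 ik]; [exact: chain1 | apply: chainS => //; apply: ltnW].
have [[p [q [homp homq pK]]] noiso] := chainS k.+1 isT (ltnSn _).
pose e' j := if j == k.+1 then f \o p \o q \o g else e j.
have e'E j : (j < k.+1)%N -> e' j = e j by move=> jk; rewrite /e' ltn_eqF.
have e'k : e' k.+1 = f \o p \o q \o g by rewrite /e' eqxx.
exists e', (f \o p), (q \o g); split=> //; last by rewrite e'k.
- split=> [j|j m|j m|j].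
  + rewrite ltnS leq_eqVlt => /predU1P [-> | jk]; last by rewrite e'E //; apply: home.
    by rewrite e'k; apply: gmod_hom_comp homg (gmod_hom_comp homq (gmod_hom_comp homp homf)).
  + rewrite ltnS leq_eqVlt => /predU1P [-> | jk]; last by rewrite e'E //; apply: idem.
    by rewrite e'k /= fK pK.
  + rewrite ltnS leq_eqVlt => /predU1P [[->] | jk].
      by rewrite e'k e'E // !efg /= !fK.
    by rewrite !e'E ?(ltnW jk) //; apply: adj.
  + rewrite ltnS leq_eqVlt => /predU1P [[->] | jk] eq_e; last first.
      by apply: (dist j jk) => m; rewrite -!e'E ?(ltnW jk).
    apply: noiso; exists p; split=> //; exists q => // y; apply: (can_inj fK).
    by have := eq_e (f y); rewrite e'E // e'k efg /= !fK.
- exact: gmod_hom_comp homp homf.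
- exact: gmod_hom_comp homg homq.
- by move=> y /=; rewrite fK pK.
Qed.

End ChainIdempotents.

Section ChainDifferences.
Variables (G : groupType) (M : gmodule G) (e : nat -> M -> M) (k : nat).
Hypothesis chain_e : idempotent_chain e k.

Lemma idempotent_chain_le i j m : (i <= j)%N -> (j < k)%N ->
  e j (e i m) = e j m /\ e i (e j m) = e j m.
Proof.
have [_ idem adj _] := chain_e.
move=> /subnK <-; elim: (j - i)%N m => [|n IHn] m jk; first by rewrite add0n !idem.
rewrite addSn in jk *; have ltk := ltnW jk.
have [s1 _] := adj _ (e i m) jk; have [t1 t2] := adj _ m jk.
have [u1 _] := IHn m ltk; have [_ v2] := IHn (e (n + i).+1 m) ltk.
by split; [rewrite -s1 u1 t1 | rewrite -t2 v2 t2].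
Qed.

Definition chain_diff j m := e j m - e j.+1 m.

Lemma chain_diff_hom j : (j.+1 < k)%N -> gmod_hom (chain_diff j).
Proof.
have [home _ _ _] := chain_e; move=> jk.
have [eD eA] := home j (ltnW jk); have [e1D e1A] := home j.+1 jk.
split=> [u v|h m]; rewrite /chain_diff; first by rewrite eD e1D opprD addrACA.
by rewrite eA e1A gactB.
Qed.

Lemma chain_diff_orthogonal i j m : (i.+1 < k)%N -> (j.+1 < k)%N ->
  chain_diff j (chain_diff i m) = if i == j then chain_diff i m else 0.
Proof.
move=> ik jk; have [home _ _ _] := chain_e.
have eB l u v : (l < k)%N -> e l (u - v) = e l u - e l v by move/home; apply: gmod_homB.
have outer a b : (a <= b)%N -> (b < k)%N -> e b (e a m) = e b m.
  by move=> ab bk; case: (idempotent_chain_le m ab bk).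
have inner a b : (a <= b)%N -> (b < k)%N -> e a (e b m) = e b m.
  by move=> ab bk; case: (idempotent_chain_le m ab bk).
rewrite /chain_diff eB ?(ltnW jk) // eB //.
case: (ltngtP i j) => [lt_ij|lt_ji|<-].
- rewrite (outer _ _ (ltnW lt_ij) (ltnW jk)) (outer _ _ lt_ij (ltnW jk)).
  by rewrite (outer _ _ (leqW (ltnW lt_ij)) jk) (outer _ _ (leqW lt_ij) jk) !subrr.
- rewrite (inner _ _ (ltnW lt_ji) (ltnW ik)) (inner _ _ (leqW (ltnW lt_ji)) ik).
  by rewrite (inner _ _ lt_ji (ltnW ik)) (inner _ _ (leqW lt_ji) ik) subrr.
- rewrite (outer _ _ (leqnn i) (ltnW ik)) (inner _ _ (leqnSn i) ik).
  by rewrite (outer _ _ (leqnSn i) ik) (outer _ _ (leqnn _) ik) (subrr (e i.+1 m)) subr0.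
Qed.

Lemma chain_diff_nonzero j : (j.+1 < k)%N -> nonzero (hom_image (chain_diff j)).
Proof.
move=> jk; have [_ _ _ dist] := chain_e.
apply: contrapT => nz0; apply: (dist j jk) => m; apply/eqP; rewrite -subr_eq0.
by apply: contrapT => d0; apply: nz0; exists (chain_diff j m); [exists m | apply/negP].
Qed.

End ChainDifferences.

Lemma orthogonal_independent (G : groupType) (M : gmodule G) (d : nat -> M -> M) k :
  (forall j, (j < k)%N -> gmod_hom (d j)) ->
  (forall i j m, (i < k)%N -> (j < k)%N -> d j (d i m) = if i == j then d i m else 0) ->
  independent (fun z => z = 0) (fun j => hom_image (d j)) k.
Proof.
move=> homd dd n a -> imd; rewrite add0r => sum0; split=> // j jk.
have homdj := homd j jk; have := congr1 (d j) sum0.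
rewrite gmod_hom_sum // gmod_hom0 //.
rewrite (eq_bigr (fun i : 'I_k => if (i : nat) == j then a j else 0)) ?sum_ord_delta //.
move=> i _; have [m am] := imd i (ltn_ord i).
by rewrite am dd //; case: eqP => // <-.
Qed.

Unset Implicit Arguments.

Theorem proposition3p10 (G : groupType) (M : gmodule G) :
  virtually_polycyclic G -> gmod_fin_gen M -> depth_finite M.
Proof.
move=> vpG fgM; have [d boundM] := bounded_independent0 (noetherian_fin_gen vpG fgM).
exists d.+1 => -[//|k] N /chain_idempotents [e [_ [_ [chain_e _ _ _ _]]]].
rewrite ltnS; apply: (boundM k (fun j => hom_image (chain_diff e j))).
  move=> j jk; split; last exact: (chain_diff_nonzero chain_e jk).
  exact/submod_hom_image/(chain_diff_hom chain_e jk).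
apply: orthogonal_independent => [j jk|i j m ik jk]; first exact: (chain_diff_hom chain_e jk).
exact: (chain_diff_orthogonal chain_e m ik jk).
Qed.
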